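(* Let $n$ be a positive integer and let $\mathcal{B}$ be a balanced bipartite graph on $2n$ vertices with parts $V_1$ and $V_2$ such that $\delta(\mathcal{B})\geq\frac{n}{2}+1$. Let $S\subseteq V(\mathcal{B})$ with $|S|=n+1$ such that $\mathcal{B}[S]$ is a forest. If $\min\{|S\cap V_1|,|S\cap V_2|\}=2$, then $n$ is even.
   Context: All graphs are finite and simple. A balanced bipartite graph on $2n$ vertices is a bipartite graph with a given bipartition $(V_1,V_2)$ where $|V_1|=|V_2|=n$. $\delta(G)$ denotes the minimum degree of $G$, and $G[S]$ the subgraph induced by $S\subseteq V(G)$. *)

From mathcomp Require Import all_boot.
Set Implicit Arguments. Unset Strict Implicit. Unset Printing Implicit Defensive.

Definition simple_graph (T : finType) (e : rel T) : Prop :=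
  symmetric e /\ irreflexive e.

Definition deg (T : finType) (e : rel T) (v : T) : nat := #|[set w | e v w]|.

Definition balanced_bipartite (T : finType) (e : rel T) (V1 V2 : {set T}) (n : nat) : Prop :=
  simple_graph e /\ [disjoint V1 & V2] /\ V1 :|: V2 = [set: T] /\
  #|V1| = n /\ #|V2| = n /\
  (forall x y, e x y -> (x \in V1) && (y \in V2) || (x \in V2) && (y \in V1)).

Definition is_cycle_in (T : finType) (e : rel T) (S : {set T}) (s : seq T) : bool :=
  [&& 2 < size s, uniq s, all (fun x => x \in S) s & cycle e s].

Definition induced_forest (T : finType) (e : rel T) (S : {set T}) : Prop :=
  forall s : seq T, ~~ is_cycle_in e S s.

From mathcomp Require Import all_boot.
From mathcomp Require Import zify.

(* Say S meets V1 in exactly two vertices a and b. Then S meets V2 in n - 1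
   vertices, so only one vertex of V2 lies outside S, and each of a, b has at
   least n/2 neighbours in S, i.e. at least (n + 1)/2 when n is odd. Two such
   neighbourhoods inside the (n - 1)-set S :&: V2 share two vertices x and y,
   and a x b y is a 4-cycle in B[S]. *)

Lemma forest_common_neighbours {T : finType} {e : rel T} {S : {set T}} {a b : T} :
  simple_graph e -> induced_forest e S -> a \in S -> b \in S -> a != b ->
  #|[set w in S | e a w] :&: [set w in S | e b w]| <= 1.
Proof.
move=> [esym eirr] forest aS bS ab; rewrite leqNgt; apply/negP.
case/card_gt1P=> x [y [+ + xy]]; rewrite !inE.
move=> /andP [/andP [xS ax] /andP [_ bx]] /andP [/andP [yS ay] /andP [_ by']].
have neq_nbr u v : e u v -> u != v by apply: contraTneq => ->; rewrite eirr.
apply/negP: (forest [:: a; x; b; y]).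
rewrite /is_cycle_in /= !inE aS xS bS yS /= ax by' (esym x b) bx (esym y a) ay /=.
by rewrite !negb_or ab xy !neq_nbr // esym.
Qed.

Section BalancedBipartite.

Context {T : finType} {e : rel T} {V1 V2 : {set T}} {n : nat}.
Hypothesis bip : balanced_bipartite e V1 V2 n.

Lemma balanced_bipartite_sym : balanced_bipartite e V2 V1 n.
Proof.
case: bip => simple [dis [cov [c1 [c2 sides]]]].
do !split => //; first by rewrite disjoint_sym.
  by rewrite setUC.
by move=> x y /sides; rewrite orbC.
Qed.

Lemma in_V2 x : (x \in V2) = (x \notin V1).
Proof.
case: bip => _ [dis [cov _]].
have := disjoint_setI0 dis => /setP /(_ x); rewrite !inE.
have : x \in V1 :|: V2 by rewrite cov inE.
by rewrite inE; case: (x \in V1).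
Qed.

Lemma edge_V1_V2 {x y} : x \in V1 -> e x y -> y \in V2.
Proof.
case: bip => _ [_ [_ [_ [_ sides]]]] xV1 /sides.
by rewrite xV1 (in_V2 x) xV1 /= orbF.
Qed.

Lemma deg_V1_le (S : {set T}) {a} :
  a \in V1 -> deg e a <= #|[set w in S | e a w]| + #|V2 :\: S|.
Proof.
move=> aV1; rewrite /deg -(cardsID S [set w | e a w]) leq_add //.
  by apply: subset_leq_card; apply/subsetP=> w; rewrite !inE andbC.
by apply: subset_leq_card; apply/subsetP=> w; rewrite !inE => /andP [-> /(edge_V1_V2 aV1)].
Qed.

Lemma nbr_in_V2 (S : {set T}) {a} : a \in V1 -> [set w in S | e a w] \subset S :&: V2.
Proof. by move=> aV1; apply/subsetP=> w; rewrite !inE => /andP [-> /(edge_V1_V2 aV1)]. Qed.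

Lemma even_of_forest_meeting_V1_twice {S : {set T}} :
  (forall v : T, n + 2 <= 2 * deg e v) ->
  #|S| = n + 1 -> induced_forest e S -> #|S :&: V1| = 2 -> ~~ odd n.
Proof.
move=> hdeg cS forest cSV1; apply/negP=> n_odd.
have cV2 : #|V2| = n by case: bip => _ [_ [_ [_ []]]].
have cSV2 : #|S :&: V2| = n - 1.
  have -> : S :&: V2 = S :\: V1 by apply/setP=> x; rewrite !inE in_V2 andbC.
  by have := cardsID V1 S; rewrite cSV1 cS; lia.
have cV2S : #|V2 :\: S| = 1 by have := cardsID S V2; rewrite setIC cSV2 cV2; lia.
have many_nbrs a : a \in V1 -> n./2.+1 <= #|[set w in S | e a w]|.
  move=> aV1; have := deg_V1_le S aV1; have := hdeg a.
  by have := odd_double_half n; rewrite n_odd -muln2 cV2S; lia.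
have /cards2P [a [b [ab Sab]]] : #|S :&: V1| == 2 by rewrite cSV1.
have : a \in S :&: V1 by rewrite Sab !inE eqxx.
have : b \in S :&: V1 by rewrite Sab !inE eqxx orbT.
rewrite !inE => /andP [bS bV1] /andP [aS aV1].
have common := forest_common_neighbours bip.1 forest aS bS ab.
have union : #|[set w in S | e a w] :|: [set w in S | e b w]| <= #|S :&: V2|.
  by apply/subset_leq_card; rewrite subUset !nbr_in_V2.
have := cardsU [set w in S | e a w] [set w in S | e b w].
have := many_nbrs a aV1; have := many_nbrs b bV1.
by move: union; rewrite cSV2; have := odd_double_half n; rewrite n_odd -muln2; lia.
Qed.

End BalancedBipartite.

Theorem theorem2p4 (n : nat) (T : finType) (e : rel T) (V1 V2 : {set T}) (S : {set T}) :
  0 < n ->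
  balanced_bipartite e V1 V2 n ->
  (forall v : T, n + 2 <= 2 * deg e v) ->
  #|S| = n + 1 ->
  induced_forest e S ->
  minn #|S :&: V1| #|S :&: V2| = 2 ->
  ~~ odd n.
Proof.
move=> _ bip hdeg cS forest; rewrite /minn; case: ltnP => _ two.
  exact: (even_of_forest_meeting_V1_twice bip hdeg cS forest two).
exact: (even_of_forest_meeting_V1_twice (balanced_bipartite_sym bip) hdeg cS forest two).
Qed.
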